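(* Let $P$ be an irreducible transition matrix on a finite set $G$ with $|G|\ge2$, reversible with respect to the probability measure $\pi$. Then for every $S\subset G$ and every $x\in S$, $$h_S(x)\le u(P)^{-1}\,\pi(x)\,\mathbb E_x[T_S^+].$$
   Context: $(X_t)$ is the chain with transition matrix $P$. For $A\subset G$, $T_A=\inf\{t\ge0:X_t\in A\}$ and $T_A^+=\inf\{t\ge1:X_t\in A\}$. $\Pr_z,\mathbb E_z$ refer to the chain started at $z$. $u(P):=\min_{x\neq y}\Pr_x[T_y<T_x^+]$. The harmonic measure on $S$ from $y$ is $h_{y,S}(x)=\Pr_y[X_{T_S}=x]$, and the harmonic measure from stationarity is $h_S(x)=\sum_{y\in G}\pi(y)h_{y,S}(x)$. *)

(* classical reals. States of G are 0 .. n-1 (|G| = n). *)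
From Stdlib Require Import Reals Lra ClassicalEpsilon.
Open Scope R_scope.

Fixpoint rsum (n : nat) (f : nat -> R) : R :=
  match n with O => 0 | S m => rsum m f + f m end.

(* The limit of a sequence (chosen by classical choice; meaningful when it converges). *)
Definition Rlim (u : nat -> R) : R :=
  epsilon (inhabits 0) (fun l => Un_cv u l).

Definition indic (b : bool) : R := if b then 1 else 0.

Fixpoint Ppow (n : nat) (P : nat -> nat -> R) (t : nat) (i j : nat) : R :=
  match t with
  | O => if Nat.eqb i j then 1 else 0
  | S t' => rsum n (fun k => Ppow n P t' i k * P k j)
  end.

Definition stochastic (n : nat) (P : nat -> nat -> R) : Prop :=
  (forall i j, (i < n)%nat -> (j < n)%nat -> 0 <= P i j) /\
  (forall i, (i < n)%nat -> rsum n (fun j => P i j) = 1).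

Definition irreducible (n : nat) (P : nat -> nat -> R) : Prop :=
  forall i j, (i < n)%nat -> (j < n)%nat -> exists t, 0 < Ppow n P t i j.

Definition prob_measure (n : nat) (pi : nat -> R) : Prop :=
  (forall i, (i < n)%nat -> 0 <= pi i) /\ rsum n pi = 1.

Definition reversible (n : nat) (P : nat -> nat -> R) (pi : nat -> R) : Prop :=
  forall i j, (i < n)%nat -> (j < n)%nat -> pi i * P i j = pi j * P j i.

(* hitk n P A x k z = Pr_z[ T_A <= k and X_{T_A} = x ]  (T_A = inf{t >= 0 : X_t in A}) *)
Fixpoint hitk (n : nat) (P : nat -> nat -> R) (A : nat -> bool) (x : nat)
  (k : nat) (z : nat) : R :=
  if A z then (if Nat.eqb z x then 1 else 0)
  else match k with
       | O => 0
       | S k' => rsum n (fun w => P z w * hitk n P A x k' w)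
       end.

(* harmonic measure from y: h_{y,A}(x) = Pr_y[X_{T_A} = x] *)
Definition harm_from (n : nat) (P : nat -> nat -> R) (A : nat -> bool) (y x : nat) : R :=
  Rlim (fun k => hitk n P A x k y).

Definition harm (n : nat) (P : nat -> nat -> R) (pi : nat -> R) (A : nat -> bool) (x : nat) : R :=
  rsum n (fun y => pi y * harm_from n P A y x).

(* escape n P x y k z = Pr_z[ T_y <= k and T_y < T_x ] *)
Fixpoint escape (n : nat) (P : nat -> nat -> R) (x y : nat) (k : nat) (z : nat) : R :=
  if Nat.eqb z y then 1
  else if Nat.eqb z x then 0
  else match k with
       | O => 0
       | S k' => rsum n (fun w => P z w * escape n P x y k' w)
       end.

(* Pr_x[ T_y < T_x^+ ] (first step, then the chain from X_1 must reach y before x) *)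
Definition escape_prob (n : nat) (P : nat -> nat -> R) (x y : nat) : R :=
  Rlim (fun k => rsum n (fun w => P x w * escape n P x y k w)).

Definition uP (n : nat) (P : nat -> nat -> R) : R :=
  epsilon (inhabits 0) (fun u =>
    (exists x y, (x < n)%nat /\ (y < n)%nat /\ x <> y /\ u = escape_prob n P x y) /\
    (forall x y, (x < n)%nat -> (y < n)%nat -> x <> y -> u <= escape_prob n P x y)).

(* firsthit n P A m w = Pr_w[ T_A = m ] *)
Fixpoint firsthit (n : nat) (P : nat -> nat -> R) (A : nat -> bool) (m : nat) (w : nat) : R :=
  match m with
  | O => indic (A w)
  | S m' => indic (negb (A w)) * rsum n (fun v => P w v * firsthit n P A m' v)
  end.

(* Pr_x[ T_A^+ = t ]  for t >= 1  (T_A^+ = inf{t >= 1 : X_t in A}) *)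
Definition ret_prob (n : nat) (P : nat -> nat -> R) (A : nat -> bool) (x : nat) (t : nat) : R :=
  match t with
  | O => 0
  | S m => rsum n (fun w => P x w * firsthit n P A m w)
  end.

Definition exp_ret (n : nat) (P : nat -> nat -> R) (A : nat -> bool) (x : nat) : R :=
  Rlim (fun N => rsum N (fun t => INR t * ret_prob n P A x t)).

(* Write A for the target set and Q for the chain killed on entering A,
   Q f (w) = sum_y P(w,y) 1[y not in A] f(y), so that Q^t 1 (x) = Pr_x[T_A^+ > t].

   1. Time reversal.  Reversibility makes Q self-adjoint for pi; unrolling the
      recursion for the hitting probabilities then gives, for every k,
        sum_y pi(y) Pr_y[T_A <= k, X_{T_A} = x] = pi(x) sum_{t <= k} Pr_x[T_A^+ > t].
   2. Letting k go to infinity, h_A(x) = pi(x) E_x[T_A^+].  When pi(x) > 0 the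
      left-hand side is at most 1, so the survival series converges; since it is
      nonincreasing, N Pr_x[T_A^+ > N] -> 0, which identifies its sum with
      E_x[T_A^+] = sum_t t Pr_x[T_A^+ = t].  When pi(x) = 0 both sides vanish.
   3. 0 < u(P) <= 1: every escape probability is a limit of averages of numbers
      in [0,1] and is positive by irreducibility, and since |G| >= 2 the minimum
      defining u(P) is attained.
   The theorem follows: h_S(x) = pi(x) E_x[T_S^+] <= u(P)^{-1} pi(x) E_x[T_S^+]. *)

From Stdlib Require Import Reals Lra Lia ClassicalEpsilon Classical.
Open Scope R_scope.

Lemma rsum_ext m f g : (forall i, (i < m)%nat -> f i = g i) -> rsum m f = rsum m g.
Proof.
  induction m as [|m IH]; intros H; simpl; [reflexivity|].
  rewrite IH by (intros; apply H; lia). rewrite H by lia. reflexivity.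
Qed.

Lemma rsum_le m f g : (forall i, (i < m)%nat -> f i <= g i) -> rsum m f <= rsum m g.
Proof.
  induction m as [|m IH]; intros H; simpl; [lra|].
  assert (rsum m f <= rsum m g) by (apply IH; intros; apply H; lia).
  assert (f m <= g m) by (apply H; lia). lra.
Qed.

Lemma rsum_zero m : rsum m (fun _ => 0) = 0.
Proof. induction m as [|m IH]; simpl; [|rewrite IH]; lra. Qed.

Lemma rsum_nonneg m f : (forall i, (i < m)%nat -> 0 <= f i) -> 0 <= rsum m f.
Proof. intros H. rewrite <- (rsum_zero m). apply rsum_le. exact H. Qed.

Lemma rsum_plus m f g : rsum m (fun i => f i + g i) = rsum m f + rsum m g.
Proof. induction m as [|m IH]; simpl; [|rewrite IH]; lra. Qed.

Lemma rsum_minus m f g : rsum m (fun i => f i - g i) = rsum m f - rsum m g.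
Proof. induction m as [|m IH]; simpl; [|rewrite IH]; lra. Qed.

Lemma rsum_scal m c f : rsum m (fun i => c * f i) = c * rsum m f.
Proof. induction m as [|m IH]; simpl; [|rewrite IH]; lra. Qed.

Lemma rsum_const m c : rsum m (fun _ => c) = INR m * c.
Proof. induction m as [|m IH]; simpl rsum; [simpl; lra|]. rewrite IH, S_INR. lra. Qed.

Lemma rsum_swap m k (F : nat -> nat -> R) :
  rsum m (fun i => rsum k (F i)) = rsum k (fun j => rsum m (fun i => F i j)).
Proof.
  induction m as [|m IH]; simpl.
  - symmetry. apply rsum_zero.
  - rewrite IH, <- rsum_plus. reflexivity.
Qed.

Lemma rsum_split a b f : rsum (a + b) f = rsum a f + rsum b (fun s => f (a + s)%nat).
Proof.
  induction b as [|b IH]; simpl; [rewrite Nat.add_0_r; lra|].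
  rewrite Nat.add_succ_r. simpl. rewrite IH. lra.
Qed.

Lemma rsum_shift m f : rsum (S m) f = f O + rsum m (fun t => f (S t)).
Proof. replace (S m) with (1 + m)%nat by lia. rewrite rsum_split. simpl. lra. Qed.

Lemma rsum_delta m x f : (x < m)%nat ->
  rsum m (fun i => (if Nat.eqb i x then 1 else 0) * f i) = f x.
Proof.
  induction m as [|m IH]; intros Hx; [lia|]. cbn [rsum].
  destruct (Nat.eq_dec x m) as [->|Hxm].
  - rewrite Nat.eqb_refl, (rsum_ext _ _ (fun _ => 0)), rsum_zero; [ring|].
    intros i Hi. rewrite (proj2 (Nat.eqb_neq i m)) by lia. ring.
  - rewrite (proj2 (Nat.eqb_neq m x)) by lia. rewrite IH by lia. ring.
Qed.

Lemma rsum_pos_exists m f : 0 < rsum m f -> exists i, (i < m)%nat /\ 0 < f i.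
Proof.
  induction m as [|m IH]; simpl; intros H; [lra|].
  destruct (Rlt_dec 0 (f m)) as [Hm|Hm]; [exists m; split; [lia|exact Hm]|].
  destruct IH as [i [Hi Hfi]]; [lra|]. exists i; split; [lia|exact Hfi].
Qed.

Lemma rsum_nonneg_zero m f : (forall i, (i < m)%nat -> 0 <= f i) -> rsum m f <= 0 ->
  forall i, (i < m)%nat -> f i = 0.
Proof.
  induction m as [|m IH]; simpl; intros Hf Hs i Hi; [lia|].
  assert (0 <= rsum m f) by (apply rsum_nonneg; intros; apply Hf; lia).
  assert (0 <= f m) by (apply Hf; lia).
  destruct (Nat.eq_dec i m) as [->|Him]; [lra|].
  apply IH; [intros; apply Hf; lia | lra | lia].
Qed.

Lemma indic_unit b : 0 <= indic b <= 1.
Proof. destruct b; simpl; lra. Qed.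

Lemma delta_unit a w : 0 <= (if Nat.eqb w a then 1 else 0) <= 1.
Proof. destruct (Nat.eqb w a); lra. Qed.

Lemma finite_argmin (Q : nat -> Prop) (g : nat -> R) N :
  (exists i, (i < N)%nat /\ Q i) ->
  exists i, (i < N)%nat /\ Q i /\ forall j, (j < N)%nat -> Q j -> g i <= g j.
Proof.
  induction N as [|N IH]; intros [i [Hi Qi]]; [lia|].
  destruct (classic (exists i, (i < N)%nat /\ Q i)) as [Hex|Hnone].
  - destruct (IH Hex) as [m [Hm [Qm Hmin]]].
    destruct (classic (Q N /\ g N < g m)) as [[QN HN]|Hnot].
    + exists N. split; [lia|]. split; [exact QN|]. intros j Hj Qj.
      destruct (Nat.eq_dec j N) as [->|Hjn]; [lra|].
      specialize (Hmin j ltac:(lia) Qj). lra.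
    + exists m. split; [lia|]. split; [exact Qm|]. intros j Hj Qj.
      destruct (Nat.eq_dec j N) as [->|Hjn]; [|apply Hmin; [lia|exact Qj]].
      apply Rnot_lt_le. intros HN. apply Hnot. split; assumption.
  - assert (i = N) as ->.
    { destruct (Nat.eq_dec i N) as [|Hin]; [assumption|].
      exfalso. apply Hnone. exists i. split; [lia|exact Qi]. }
    exists N. split; [lia|]. split; [exact Qi|]. intros j Hj Qj.
    destruct (Nat.eq_dec j N) as [->|Hjn]; [lra|].
    exfalso. apply Hnone. exists j. split; [lia|exact Qj].
Qed.

(* Minimum over pairs, by coding the pair (i, j) as i * N + j. *)
Lemma pair_argmin (Q : nat -> nat -> Prop) (g : nat -> nat -> R) N :
  (exists i j, (i < N)%nat /\ (j < N)%nat /\ Q i j) ->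
  exists i j, (i < N)%nat /\ (j < N)%nat /\ Q i j /\
    forall i' j', (i' < N)%nat -> (j' < N)%nat -> Q i' j' -> g i j <= g i' j'.
Proof.
  intros [i [j [Hi [Hj Qij]]]].
  assert (Hdecode : forall i j, (i < N)%nat -> (j < N)%nat ->
            ((i * N + j) / N = i /\ (i * N + j) mod N = j)%nat).
  { intros i0 j0 Hi0 Hj0. split; symmetry;
      [apply (Nat.div_unique _ _ _ j0) | apply (Nat.mod_unique _ _ i0)]; nia. }
  destruct (finite_argmin (fun p => Q (p / N) (p mod N))%nat
              (fun p => g (p / N) (p mod N))%nat (N * N)) as [p [Hp [Qp Hmin]]].
  { exists (i * N + j)%nat. destruct (Hdecode i j Hi Hj) as [-> ->]. split; [nia|exact Qij]. }
  exists (p / N)%nat, (p mod N)%nat.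
  split; [apply Nat.Div0.div_lt_upper_bound; lia|].
  split; [apply Nat.mod_upper_bound; lia|].
  split; [exact Qp|]. intros i' j' Hi' Hj' Qij'.
  specialize (Hmin (i' * N + j')%nat). cbv beta in Hmin.
  destruct (Hdecode i' j' Hi' Hj') as [Ediv Emod]. rewrite Ediv, Emod in Hmin.
  apply Hmin; [nia|exact Qij'].
Qed.

Lemma cv_const c : Un_cv (fun _ => c) c.
Proof. intros e He. exists O. intros. unfold Rdist. rewrite Rminus_diag, Rabs_R0. lra. Qed.

Lemma cv_shift u l : Un_cv (fun k => u (S k)) l -> Un_cv u l.
Proof.
  intros H e He. destruct (H e He) as [N HN]. exists (S N). intros [|k] Hk; [lia|].
  apply HN. lia.
Qed.

Lemma cv_succ u l : Un_cv u l -> Un_cv (fun k => u (S k)) l.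
Proof. intros H e He. destruct (H e He) as [N HN]. exists N. intros k Hk. apply HN. lia. Qed.

Lemma cv_rsum m (F : nat -> nat -> R) (l : nat -> R) :
  (forall y, (y < m)%nat -> Un_cv (fun k => F k y) (l y)) ->
  Un_cv (fun k => rsum m (F k)) (rsum m l).
Proof.
  induction m as [|m IH]; intros H; simpl; [apply cv_const|].
  apply CV_plus; [apply IH; intros; apply H; lia | apply H; lia].
Qed.

Lemma Rlim_eq u l : Un_cv u l -> Rlim u = l.
Proof. intros H. unfold Rlim. apply (UL_sequence u); [apply epsilon_spec; eauto | exact H]. Qed.

Lemma monotone_limit u M : (forall k, u k <= u (S k)) -> (forall k, u k <= M) ->
  exists l, Un_cv u l /\ (forall k, u k <= l) /\ l <= M.
Proof.
  intros Hinc Hbd.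
  destruct (growing_cv u Hinc) as [l Hl]; [exists M; intros y [k ->]; apply Hbd|].
  exists l. split; [exact Hl|]. split; [exact (growing_ineq u l Hinc Hl)|].
  exact (Rle_cv_lim Hbd Hl (cv_const M)).
Qed.

(* A nonnegative nonincreasing summable sequence satisfies N d_N -> 0: the terms
   d_{N/2}, ..., d_{N-1} each dominate d_N and form a tail of the series. *)
Lemma summable_decreasing_tail (d : nat -> R) L :
  (forall t, 0 <= d t) -> (forall t, d (S t) <= d t) ->
  Un_cv (fun N => rsum N d) L -> Un_cv (fun N => INR N * d N) 0.
Proof.
  intros Hpos Hdec Hcv.
  assert (Hanti : forall a b, (a <= b)%nat -> d b <= d a).
  { intros a b Hab. induction Hab as [|b Hab IH]; [lra|]. specialize (Hdec b). lra. }
  assert (Hbelow : forall M, rsum M d <= L).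
  { apply growing_ineq; [|exact Hcv]. intros M. simpl. specialize (Hpos M). lra. }
  assert (Hhalf : forall N, (N / 2 <= N /\ N <= 2 * (N - N / 2))%nat).
  { intros N. pose proof (Nat.div_mod N 2 ltac:(lia)).
    pose proof (Nat.mod_upper_bound N 2 ltac:(lia)). lia. }
  assert (Hdom : forall N, INR N * d N <= 2 * (L - rsum (N / 2) d)).
  { intros N. set (M := (N / 2)%nat). destruct (Hhalf N) as [HMN HNM]. fold M in HMN, HNM.
    assert (Htail : INR (N - M) * d N <= rsum (N - M) (fun s => d (M + s)%nat)).
    { rewrite <- rsum_const. apply rsum_le. intros. apply Hanti. lia. }
    assert (Hsplit : rsum N d = rsum M d + rsum (N - M) (fun s => d (M + s)%nat)).
    { rewrite <- rsum_split. f_equal. lia. }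
    apply le_INR in HNM. rewrite mult_INR in HNM. simpl (INR 2) in HNM.
    pose proof (Hbelow N). pose proof (Hpos N).
    assert (INR N * d N <= 2 * INR (N - M) * d N) by nra. lra. }
  intros eps Heps. destruct (Hcv (eps / 2)) as [M0 HM0]; [lra|].
  exists (2 * M0)%nat. intros N HN.
  assert (HM : (N / 2 >= M0)%nat).
  { pose proof (Nat.div_mod N 2 ltac:(lia)). pose proof (Nat.mod_upper_bound N 2 ltac:(lia)). lia. }
  specialize (HM0 _ HM). unfold Rdist in *.
  pose proof (Hdom N). pose proof (Hbelow (N / 2)%nat). pose proof (Hpos N). pose proof (pos_INR N).
  rewrite Rabs_left1 in HM0 by lra. rewrite Rminus_0_r, Rabs_right by nra. lra.
Qed.

Section StochasticMatrix.
Variable n : nat.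
Variable P : nat -> nat -> R.
Hypothesis P_nonneg : forall i j, (i < n)%nat -> (j < n)%nat -> 0 <= P i j.
Hypothesis P_rows : forall i, (i < n)%nat -> rsum n (fun j => P i j) = 1.

Definition average (f : nat -> R) (z : nat) : R := rsum n (fun w => P z w * f w).

Lemma average_nonneg f z : (z < n)%nat -> (forall w, (w < n)%nat -> 0 <= f w) ->
  0 <= average f z.
Proof.
  intros Hz Hf. apply rsum_nonneg. intros w Hw.
  apply Rmult_le_pos; [apply P_nonneg | apply Hf]; assumption.
Qed.

Lemma average_unit f z : (z < n)%nat -> (forall w, (w < n)%nat -> 0 <= f w <= 1) ->
  0 <= average f z <= 1.
Proof.
  intros Hz Hf. split; [apply average_nonneg; [exact Hz | apply Hf]|].
  unfold average. rewrite <- (P_rows z Hz). apply rsum_le. intros w Hw.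
  pose proof (P_nonneg z w Hz Hw). pose proof (Hf w Hw). nra.
Qed.

Lemma average_mono f g z : (z < n)%nat -> (forall w, (w < n)%nat -> f w <= g w) ->
  average f z <= average g z.
Proof.
  intros Hz Hfg. apply rsum_le. intros w Hw.
  apply Rmult_le_compat_l; [apply P_nonneg | apply Hfg]; assumption.
Qed.

Lemma average_support f z v : (z < n)%nat -> (v < n)%nat ->
  (forall w, (w < n)%nat -> 0 <= f w) -> average f z <= 0 -> 0 < P z v -> f v = 0.
Proof.
  intros Hz Hv Hf Hzero Hzv.
  assert (Hterm : P z v * f v = 0).
  { apply (rsum_nonneg_zero n (fun w => P z w * f w)); [|exact Hzero|exact Hv].
    intros w Hw. apply Rmult_le_pos; [apply P_nonneg | apply Hf]; assumption. }
  destruct (Rmult_integral _ _ Hterm); lra.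
Qed.

(* payoff B b k z = E_z[b(X_{T_B}); T_B <= k]: the reward b collected when the
   chain started at z first enters B, provided this happens within k steps. *)
Fixpoint payoff (B : nat -> bool) (b : nat -> R) (k z : nat) : R :=
  if B z then b z
  else match k with
       | O => 0
       | S k' => rsum n (fun w => P z w * payoff B b k' w)
       end.

Section Payoff.
Variable B : nat -> bool.
Variable b : nat -> R.
Hypothesis b_unit : forall z, (z < n)%nat -> 0 <= b z <= 1.

Lemma payoff_unit k z : (z < n)%nat -> 0 <= payoff B b k z <= 1.
Proof.
  revert z. induction k as [|k IH]; intros z Hz; cbn [payoff]; destruct (B z);
    auto; try lra.
  change (0 <= average (payoff B b k) z <= 1). apply average_unit; auto.
Qed.

Lemma payoff_mono k z : (z < n)%nat -> payoff B b k z <= payoff B b (S k) z.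
Proof.
  revert z. induction k as [|k IH]; intros z Hz; cbn [payoff]; destruct (B z); try lra.
  - change (0 <= average (payoff B b 0) z).
    apply average_nonneg; [exact Hz | intros; apply payoff_unit; assumption].
  - change (average (payoff B b k) z <= average (payoff B b (S k)) z).
    apply average_mono; auto.
Qed.

Lemma payoff_limit z : (z < n)%nat -> exists l, Un_cv (fun k => payoff B b k z) l.
Proof.
  intros Hz. destruct (monotone_limit (fun k => payoff B b k z) 1) as [l [Hl _]].
  - intros k. apply payoff_mono. exact Hz.
  - intros k. apply payoff_unit. exact Hz.
  - exists l. exact Hl.
Qed.

End Payoff.

Lemma Ppow_nonneg t i j : (i < n)%nat -> (j < n)%nat -> 0 <= Ppow n P t i j.
Proof.
  revert j. induction t as [|t IH]; intros j Hi Hj; simpl.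
  - destruct (Nat.eqb i j); lra.
  - apply rsum_nonneg. intros k Hk. apply Rmult_le_pos; [apply IH | apply P_nonneg]; assumption.
Qed.

Lemma closed_reach (F : nat -> Prop) :
  (forall w v, (w < n)%nat -> (v < n)%nat -> F w -> 0 < P w v -> F v) ->
  forall t z j, (z < n)%nat -> (j < n)%nat -> F z -> 0 < Ppow n P t z j -> F j.
Proof.
  intros Hclosed t. induction t as [|t IH]; intros z j Hz Hj Fz Hpath; simpl in Hpath.
  - destruct (Nat.eqb_spec z j) as [<-|]; [exact Fz | lra].
  - destruct (rsum_pos_exists _ _ Hpath) as [k [Hk Hpos]].
    pose proof (Ppow_nonneg t z k Hz Hk). pose proof (P_nonneg k j Hk Hj).
    apply (Hclosed k j Hk Hj); [apply (IH z k Hz Hk Fz) |]; nra.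
Qed.

(** * The killed chain and time reversal *)

Section KilledChain.
Variable A : nat -> bool.

Definition killed (f : nat -> R) (w : nat) : R :=
  rsum n (fun y => P w y * indic (negb (A y)) * f y).

Fixpoint killed_pow (t : nat) (f : nat -> R) : nat -> R :=
  match t with O => f | S t' => killed (killed_pow t' f) end.

(* survival t w = Q^t 1 (w) = Pr_w[T_A^+ > t]. *)
Definition survival (t : nat) : nat -> R := killed_pow t (fun _ => 1).

Lemma killed_ext f g w : (forall y, (y < n)%nat -> f y = g y) -> killed f w = killed g w.
Proof. intros H. apply rsum_ext. intros y Hy. rewrite H by exact Hy. reflexivity. Qed.

Lemma killed_pow_succ t f w : killed_pow (S t) f w = killed_pow t (killed f) w.
Proof.
  revert w. induction t as [|t IH]; intros w; [reflexivity|].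
  apply killed_ext. intros y _. apply IH.
Qed.

Lemma survival_nonneg t w : (w < n)%nat -> 0 <= survival t w.
Proof.
  revert w. induction t as [|t IH]; intros w Hw; unfold survival; simpl; [lra|].
  apply rsum_nonneg. intros y Hy. pose proof (indic_unit (negb (A y))).
  pose proof (P_nonneg w y Hw Hy). pose proof (IH y Hy). unfold survival in *.
  apply Rmult_le_pos; [apply Rmult_le_pos|]; lra.
Qed.

Lemma firsthit_nonneg m w : (w < n)%nat -> 0 <= firsthit n P A m w.
Proof.
  revert w. induction m as [|m IH]; intros w Hw; simpl; [apply indic_unit|].
  apply Rmult_le_pos; [apply indic_unit|].
  apply (average_nonneg (firsthit n P A m) w Hw IH).
Qed.

Lemma firsthit_survival m w : (w < n)%nat ->
  average (firsthit n P A m) w = survival m w - survival (S m) w.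
Proof.
  revert w. induction m as [|m IH]; intros w Hw; unfold average.
  - transitivity (rsum n (fun y => P w y - P w y * indic (negb (A y)) * 1)).
    + apply rsum_ext. intros y _. simpl. destruct (A y); simpl; ring.
    + rewrite rsum_minus, P_rows by exact Hw. reflexivity.
  - change (survival (S (S m)) w) with (killed (survival (S m)) w).
    change (survival (S m) w) with (killed (survival m) w).
    unfold killed. rewrite <- rsum_minus. apply rsum_ext. intros y Hy.
    cbn [firsthit]. pose proof (IH y Hy) as Ey. unfold average in Ey. rewrite Ey. ring.
Qed.

Lemma survival_decr t w : (w < n)%nat -> survival (S t) w <= survival t w.
Proof.
  intros Hw. pose proof (firsthit_survival t w Hw).
  pose proof (average_nonneg (firsthit n P A t) w Hw (fun v Hv => firsthit_nonneg t v Hv)).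
  lra.
Qed.

Variable x : nat.
Hypothesis x_lt : (x < n)%nat.

Lemma return_time_partial N :
  rsum (S N) (fun t => INR t * ret_prob n P A x t) =
  rsum N (fun t => survival t x) - INR N * survival N x.
Proof.
  induction N as [|N IH]; [simpl; ring|].
  cbn [rsum] in *. rewrite IH.
  change (ret_prob n P A x (S N)) with (average (firsthit n P A N) x).
  rewrite firsthit_survival, S_INR by exact x_lt. ring.
Qed.

Lemma expected_return_time L :
  Un_cv (fun N => rsum N (fun t => survival t x)) L -> exp_ret n P A x = L.
Proof.
  intros HL. unfold exp_ret. apply Rlim_eq, cv_shift.
  assert (Htail := summable_decreasing_tail (fun t => survival t x) L
           (fun t => survival_nonneg t x x_lt) (fun t => survival_decr t x x_lt) HL).
  apply (Un_cv_ext (fun N => rsum N (fun t => survival t x) - INR N * survival N x)).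
  - intros N. symmetry. apply return_time_partial.
  - replace L with (L - 0) by ring. apply CV_minus; assumption.
Qed.

Lemma hitk_payoff k z :
  hitk n P A x k z = payoff A (fun w => if Nat.eqb w x then 1 else 0) k z.
Proof.
  revert z. induction k as [|k IH]; intros z; simpl; [reflexivity|].
  destruct (A z); [reflexivity|]. apply rsum_ext. intros w _. rewrite IH. reflexivity.
Qed.

Lemma hitk_unit k z : (z < n)%nat -> 0 <= hitk n P A x k z <= 1.
Proof.
  intros Hz. rewrite hitk_payoff. apply payoff_unit; [intros; apply delta_unit | exact Hz].
Qed.

Lemma hitk_limit y : (y < n)%nat -> Un_cv (fun k => hitk n P A x k y) (harm_from n P A y x).
Proof.
  intros Hy.
  destruct (payoff_limit A (fun w => if Nat.eqb w x then 1 else 0)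
              (fun w _ => delta_unit x w) y Hy) as [l Hl].
  assert (Hhit : Un_cv (fun k => hitk n P A x k y) l).
  { apply (Un_cv_ext (fun k => payoff A (fun w => if Nat.eqb w x then 1 else 0) k y));
      [intros k; symmetry; apply hitk_payoff | exact Hl]. }
  unfold harm_from. rewrite (Rlim_eq _ l Hhit). exact Hhit.
Qed.

Hypothesis x_in_A : A x = true.

(* Since x is in A, the hitting recursion is a Kronecker delta plus a killed step. *)
Lemma hitk_zero y : hitk n P A x 0 y = if Nat.eqb y x then 1 else 0.
Proof.
  simpl. destruct (A y) eqn:Ay; [reflexivity|].
  destruct (Nat.eqb_spec y x) as [->|]; [congruence | reflexivity].
Qed.

Lemma hitk_succ k y : hitk n P A x (S k) y =
  (if Nat.eqb y x then 1 else 0) + indic (negb (A y)) * average (hitk n P A x k) y.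
Proof.
  cbn [hitk]. destruct (A y) eqn:Ay; simpl; [ring|].
  destruct (Nat.eqb_spec y x) as [->|]; [congruence | unfold average; ring].
Qed.

Variable pi : nat -> R.
Hypothesis pi_reversible : forall i j, (i < n)%nat -> (j < n)%nat -> pi i * P i j = pi j * P j i.

(* Reversibility: the killed chain is self-adjoint with respect to pi. *)
Lemma killed_adjoint g f :
  rsum n (fun y => pi y * g y * (indic (negb (A y)) * average f y)) =
  rsum n (fun w => pi w * f w * killed g w).
Proof.
  unfold average, killed.
  rewrite (rsum_ext _ _ (fun y => rsum n (fun w => pi y * g y * indic (negb (A y)) * P y w * f w))).
  2:{ intros y _. rewrite <- !rsum_scal. apply rsum_ext. intros. ring. }
  rewrite (rsum_ext _ (fun w => pi w * f w * _)
             (fun w => rsum n (fun y => pi w * f w * P w y * indic (negb (A y)) * g y))).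
  2:{ intros w _. rewrite <- rsum_scal. apply rsum_ext. intros. ring. }
  rewrite rsum_swap. apply rsum_ext. intros w Hw. apply rsum_ext. intros y Hy.
  replace (pi y * g y * indic (negb (A y)) * P y w * f w)
    with (pi y * P y w * (g y * indic (negb (A y)) * f w)) by ring.
  rewrite (pi_reversible y w Hy Hw). ring.
Qed.

Lemma time_reversal k g :
  rsum n (fun y => pi y * g y * hitk n P A x k y) =
  pi x * rsum (S k) (fun t => killed_pow t g x).
Proof.
  revert g. induction k as [|k IH]; intros g.
  - rewrite (rsum_ext _ _ (fun y => (if Nat.eqb y x then 1 else 0) * (pi y * g y))).
    2:{ intros y _. rewrite hitk_zero. ring. }
    rewrite rsum_delta by exact x_lt. simpl. ring.
  - rewrite (rsum_ext _ _ (fun y => (if Nat.eqb y x then 1 else 0) * (pi y * g y) +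
       pi y * g y * (indic (negb (A y)) * average (hitk n P A x k) y))).
    2:{ intros y _. rewrite hitk_succ. ring. }
    rewrite rsum_plus, rsum_delta, killed_adjoint by exact x_lt.
    rewrite (rsum_ext _ _ (fun w => pi w * killed g w * hitk n P A x k w)) by (intros; ring).
    rewrite IH, (rsum_shift (S k)).
    rewrite (rsum_ext _ (fun t => killed_pow (S t) g x) (fun t => killed_pow t (killed g) x))
      by (intros; apply killed_pow_succ).
    simpl. ring.
Qed.

Lemma stationary_hitting k :
  rsum n (fun y => pi y * hitk n P A x k y) = pi x * rsum (S k) (fun t => survival t x).
Proof.
  transitivity (rsum n (fun y => pi y * 1 * hitk n P A x k y)).
  - apply rsum_ext. intros. ring.
  - apply time_reversal.
Qed.

Hypothesis pi_prob : prob_measure n pi.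

(* The survival series is bounded by 1 / pi(x): its partial sums are hitting masses. *)
Lemma survival_mass_bound N : pi x * rsum N (fun t => survival t x) <= 1.
Proof.
  destruct pi_prob as [pi_nonneg pi_total].
  destruct N as [|k]; [simpl; lra|]. rewrite <- stationary_hitting, <- pi_total.
  apply rsum_le. intros y Hy. pose proof (pi_nonneg y Hy). pose proof (hitk_unit k y Hy). nra.
Qed.

Lemma harm_limit :
  Un_cv (fun k => pi x * rsum (S k) (fun t => survival t x)) (harm n P pi A x).
Proof.
  apply (Un_cv_ext (fun k => rsum n (fun y => pi y * hitk n P A x k y))).
  { intros k. apply stationary_hitting. }
  unfold harm. apply (cv_rsum n (fun k y => pi y * hitk n P A x k y)). intros y Hy.
  apply CV_mult; [apply cv_const | apply hitk_limit; exact Hy].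
Qed.

Lemma harm_nonneg : 0 <= harm n P pi A x.
Proof.
  apply (Rle_cv_lim (Un := fun _ => 0) (Vn := fun k => pi x * rsum (S k) (fun t => survival t x)));
    [|apply cv_const|apply harm_limit].
  intros k. apply Rmult_le_pos; [apply (proj1 pi_prob x x_lt)|].
  apply rsum_nonneg. intros t _. apply survival_nonneg. exact x_lt.
Qed.

Lemma harmonic_measure_identity : harm n P pi A x = pi x * exp_ret n P A x.
Proof.
  destruct (Rle_lt_or_eq_dec 0 (pi x) (proj1 pi_prob x x_lt)) as [Hpos|Hzero].
  - destruct (monotone_limit (fun N => rsum N (fun t => survival t x)) (/ pi x))
      as [L [HL _]].
    + intros N. simpl. pose proof (survival_nonneg N x x_lt). lra.
    + intros N. apply (Rmult_le_reg_l (pi x)); [exact Hpos|].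
      rewrite Rinv_r by lra. apply survival_mass_bound.
    + rewrite (expected_return_time L HL).
      apply (UL_sequence _ _ _ harm_limit).
      apply CV_mult; [apply cv_const | exact (cv_succ _ _ HL)].
  - rewrite <- Hzero, Rmult_0_l. apply (UL_sequence _ _ _ harm_limit).
    apply (Un_cv_ext (fun _ => 0)); [intros; rewrite <- Hzero; ring | apply cv_const].
Qed.

End KilledChain.

(** * Escape probabilities and u(P) *)

Lemma escape_payoff a b k z :
  escape n P a b k z =
  payoff (fun w => orb (Nat.eqb w b) (Nat.eqb w a)) (fun w => if Nat.eqb w b then 1 else 0) k z.
Proof.
  revert z. induction k as [|k IH]; intros z; cbn [escape payoff];
    destruct (Nat.eqb z b), (Nat.eqb z a); simpl; try reflexivity.
  apply rsum_ext. intros w _. rewrite IH. reflexivity.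
Qed.

Lemma escape_unit a b k z : (z < n)%nat -> 0 <= escape n P a b k z <= 1.
Proof.
  intros Hz. rewrite escape_payoff. apply payoff_unit; [intros; apply delta_unit | exact Hz].
Qed.

(* escape_step a b k = Pr_a[T_b <= k + 1, T_b < T_a^+]. *)
Definition escape_step (a b k : nat) : R := average (escape n P a b k) a.

Hypothesis P_irreducible : irreducible n P.

(* From a, the chain reaches b before returning to a with positive probability:
   otherwise the states never leading to b before a would be closed and contain a. *)
Lemma escape_step_positive a b : (a < n)%nat -> (b < n)%nat -> a <> b ->
  exists k, 0 < escape_step a b k.
Proof.
  intros Ha Hb Hab. apply NNPP. intros Hnone.
  assert (Hzero : forall k, escape_step a b k <= 0).
  { intros k. apply Rnot_lt_le. intros Hk. apply Hnone. exists k. exact Hk. }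
  set (F := fun w => forall k, escape n P a b k w = 0).
  assert (Fa : F a).
  { intros [|k]; cbn [escape]; rewrite (proj2 (Nat.eqb_neq a b) Hab), Nat.eqb_refl; reflexivity. }
  assert (Fclosed : forall w v, (w < n)%nat -> (v < n)%nat -> F w -> 0 < P w v -> F v).
  { intros w v Hw Hv Fw Hwv k.
    apply (average_support (escape n P a b k) w v Hw Hv); [| |exact Hwv].
    - intros u Hu. apply escape_unit. exact Hu.
    - destruct (Nat.eq_dec w a) as [->|Hwa]; [apply Hzero|].
      specialize (Fw (S k)). cbn [escape] in Fw.
      destruct (Nat.eqb_spec w b) as [->|Hwb]; [lra|].
      rewrite (proj2 (Nat.eqb_neq w a) Hwa) in Fw. unfold average. lra. }
  destruct (P_irreducible a b Ha Hb) as [t Ht].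
  pose proof (closed_reach F Fclosed t a b Ha Hb Fa Ht 0%nat) as Fb.
  cbn [escape] in Fb. rewrite Nat.eqb_refl in Fb. lra.
Qed.

Lemma escape_prob_bounds a b : (a < n)%nat -> (b < n)%nat -> a <> b ->
  0 < escape_prob n P a b <= 1.
Proof.
  intros Ha Hb Hab.
  destruct (monotone_limit (escape_step a b) 1) as [l [Hl [Habove Hle1]]].
  - intros k. apply average_mono; [exact Ha|]. intros w Hw.
    rewrite !escape_payoff. apply payoff_mono; [intros; apply delta_unit | exact Hw].
  - intros k. apply average_unit; [exact Ha|]. intros w Hw. apply escape_unit. exact Hw.
  - unfold escape_prob. change (0 < Rlim (escape_step a b) <= 1).
    rewrite (Rlim_eq _ l Hl).
    destruct (escape_step_positive a b Ha Hb Hab) as [k Hk].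
    specialize (Habove k). lra.
Qed.

(* With at least two states the minimum defining u(P) is attained, so u(P) is an
   escape probability. *)
Lemma uP_bounds : (2 <= n)%nat -> 0 < uP n P <= 1.
Proof.
  intros Hn.
  destruct (pair_argmin (fun a b => a <> b) (escape_prob n P) n)
    as [a [b [Ha [Hb [Hab Hmin]]]]]; [exists 0%nat, 1%nat; lia|].
  unfold uP. match goal with |- context [epsilon ?i ?p] => pose proof (epsilon_spec i p) as Hspec end.
  destruct Hspec as [[a' [b' [Ha' [Hb' [Hab' ->]]]]] _].
  - exists (escape_prob n P a b). split; [exists a, b; auto | intros; apply Hmin; assumption].
  - apply escape_prob_bounds; assumption.
Qed.

End StochasticMatrix.

Theorem mainTheorem4 (n : nat) (P : nat -> nat -> R) (pi : nat -> R)
  (Hn : (2 <= n)%nat)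
  (HP : stochastic n P)
  (Hirr : irreducible n P)
  (Hpi : prob_measure n pi)
  (Hrev : reversible n P pi)
  (S : nat -> bool) (x : nat) (Hx : (x < n)%nat) (HxS : S x = true) :
  harm n P pi S x <= / uP n P * pi x * exp_ret n P S x.
Proof.
  destruct HP as [HP0 HP1].
  pose proof (harmonic_measure_identity n P HP0 HP1 S x Hx HxS pi Hrev Hpi) as Hidentity.
  pose proof (harm_nonneg n P HP0 HP1 S x Hx HxS pi Hrev Hpi) as Hharm.
  destruct (uP_bounds n P HP0 HP1 Hirr Hn) as [Hu0 Hu1].
  assert (Hinv : 1 <= / uP n P).
  { rewrite <- Rinv_1. apply Rinv_le_contravar; assumption. }
  rewrite Rmult_assoc, <- Hidentity. nra.
Qed.
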